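(* Consider the binary SNR model with users $k\in\mathcal{K}$, resource blocks $r\in\mathcal{R}$, a 0/1 matrix $(\delta_r^k)$, positive integers $d_k$, and all utilities $w^k=1$. Let $d=\max_{k\in\mathcal{K}}d_k$. The GREEDY algorithm processes users in decreasing order of utility (ties broken randomly); when processing user $k$, if at least $d_k$ resource blocks that are active for $k$ ($\delta_r^k=1$) are still unassigned, it assigns $d_k$ of them, chosen at random, to user $k$ and admits $k$; otherwise user $k$ is rejected and assigned nothing. Then the number of users admitted by GREEDY is at least $\frac{1}{d+1}$ times the optimal value of $\max\sum_k z^k$ over $x_r^k\in\{0,1\}$, $z^k\in\{0,1\}$ subject to $\sum_k x_r^k\le1$ for every $r$, $\sum_r x_r^k\ge d_k z^k$ for every $k$, and $x_r^k\le\delta_r^k$ for all $(r,k)$.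
   Context: $x_r^k=1$ means resource block $r$ is assigned to user $k$; $\delta_r^k=1$ means block $r$ is active for user $k$; $z^k=1$ means user $k$ is admitted, which requires at least $d_k$ assigned active blocks; each block goes to at most one user. *)

From mathcomp Require Import all_boot.
Set Implicit Arguments. Unset Strict Implicit. Unset Printing Implicit Defensive.

(* Binary SNR model: users K, resource blocks R (finite types),
   delta k r = true iff block r is active for user k, demands dk k > 0.
   All utilities w^k = 1. *)

Section SNR.
Variables (K R : finType) (delta : K -> R -> bool) (dk : K -> nat).

Definition dmax : nat := \max_(k : K) dk k.

Definition feasible (x : {ffun K -> {ffun R -> bool}}) (z : {ffun K -> bool}) : bool :=
  [&& [forall r : R, \sum_(k : K) (x k r : nat) <= 1],
      [forall k : K, dk k * z k <= \sum_(r : R) (x k r : nat)] &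
      [forall k : K, forall r : R, x k r ==> delta k r]].

Definition opt_value : nat :=
  \max_(xz : {ffun K -> {ffun R -> bool}} * {ffun K -> bool} | feasible xz.1 xz.2)
     \sum_(k : K) (xz.2 k : nat).

(* A run of GREEDY: users are processed in the order [s] (a permutation of
   all users; since all utilities are equal, any order may arise from the
   random tie-breaking).  [A k] is the set of blocks assigned to user k and
   [z k] whether k is admitted. *)
Definition earlier (s : seq K) (j k : K) : bool := index j s < index k s.

Definition avail (s : seq K) (A : K -> {set R}) (k : K) : {set R} :=
  [set r | delta k r & [forall j : K, earlier s j k ==> (r \notin A j)]].

Definition greedy_run (s : seq K) (A : K -> {set R}) (z : K -> bool) : Prop :=
  perm_eq s (enum K) /\
  forall k : K,
    if dk k <= #|avail s A k|
    then [/\ z k = true, A k \subset avail s A k & #|A k| = dk k]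
    else z k = false /\ A k = set0.

Definition n_admitted (z : K -> bool) : nat := #|[set k : K | z k]|.

End SNR.

From mathcomp Require Import all_boot.

Set Implicit Arguments.
Unset Strict Implicit.
Unset Printing Implicit Defensive.

(* Charge every user admitted by an optimal solution but rejected by GREEDY to
   one of its optimal blocks that GREEDY assigned to somebody: such a block
   exists, for otherwise all the blocks the optimum gives to the user were
   still free when GREEDY processed it.  The optimum gives each block to at
   most one user, so at most d times the number of GREEDY-admitted users get
   charged.  Neither the processing order nor the positivity of the demands
   plays any role. *)

Lemma sum_nat_of_bool (T : finType) (P : pred T) : \sum_(i : T) (P i : nat) = #|P|.
Proof.
rewrite -sum1_card [RHS]big_mkcond; apply: eq_bigr => i _.
by rewrite unfold_in; case: (P i).
Qed.

Lemma card_bigcup_leq (I T : finType) (P : pred I) (F : I -> {set T}) :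
  #|\bigcup_(i | P i) F i| <= \sum_(i | P i) #|F i|.
Proof.
elim/big_rec2: _ => [|i n U _ leUn]; first by rewrite cards0.
by rewrite (leq_trans (leq_card_setU _ U).1) ?leq_add2l.
Qed.

Lemma sum_card_exclusive (I T : finType) (P : I -> T -> bool) (U : {set T}) :
  (forall t, \sum_(i : I) (P i t : nat) <= 1) ->
  \sum_(i : I) #|[set t in U | P i t]| <= #|U|.
Proof.
move=> P_excl; rewrite -sum1_card.
have row_card i : #|[set t in U | P i t]| = \sum_(t in U) (P i t : nat).
  rewrite big_mkcond -sum_nat_of_bool; apply: eq_bigr => t _.
  by rewrite -[_ t]/(t \in [set t in U | P i t]) inE; case: (t \in U).
under eq_bigr => i _ do rewrite row_card.
by rewrite exchange_big; apply: leq_sum => t _; apply: P_excl.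
Qed.

Section GreedyRun.

Variables (K R : finType) (delta : K -> R -> bool) (dk : K -> nat).
Variables (s : seq K) (A : K -> {set R}) (z : K -> bool).
Hypothesis run : greedy_run delta dk s A z.

Definition assigned : {set R} := \bigcup_(j : K) A j.

Lemma greedy_rejected_empty k : ~~ z k -> A k = set0.
Proof. by move=> /negbTE zkF; have := run.2 k; case: ifP => _ [] //; rewrite zkF. Qed.

Lemma card_greedy_leq_dmax k : #|A k| <= dmax dk.
Proof.
have := run.2 k; case: ifP => _ [] _; last by move=> ->; rewrite cards0.
by move=> _ ->; apply: leq_bigmax.
Qed.

Lemma card_assigned_leq : #|assigned| <= dmax dk * n_admitted z.
Proof.
rewrite (leq_trans (card_bigcup_leq _ _)) // (bigID z) /=.
rewrite [X in _ + X]big1 => [|j nzj]; last by rewrite greedy_rejected_empty ?cards0.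
rewrite addn0 mulnC /n_admitted -sum_nat_const.
under [X in _ <= X]eq_bigl => j do rewrite inE.
by apply: leq_sum => j _; apply: card_greedy_leq_dmax.
Qed.

Lemma greedy_admits_free k (B : {set R}) :
  (forall r, r \in B -> delta k r) -> dk k <= #|B| -> [disjoint B & assigned] -> z k.
Proof.
move=> B_active dk_le B_free.
have B_avail : B \subset avail delta s A k.
  apply/subsetP => r rB; rewrite inE B_active //=.
  apply/forallP => j; apply/implyP => _; apply: contraTN rB => rAj.
  by rewrite (disjointFl B_free) //; apply/bigcupP; exists j.
by have := run.2 k; rewrite (leq_trans dk_le (subset_leq_card B_avail)) => -[].
Qed.

Variables (x : {ffun K -> {ffun R -> bool}}) (zo : {ffun K -> bool}).
Hypothesis x_feasible : feasible delta dk x zo.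

Lemma optimal_rejected_blocked k :
  zo k -> ~~ z k -> 0 < #|[set r in assigned | x k r]|.
Proof.
case/and3P: x_feasible => _ /forallP/(_ k) x_dk /forallP/(_ k)/forallP x_delta.
move=> zo_k; rewrite card_gt0; apply: contraNneq => no_assigned.
apply: (greedy_admits_free (B := [set r | x k r])).
- by move=> r; rewrite inE => /(implyP (x_delta r)).
- by move: x_dk; rewrite zo_k muln1 sum_nat_of_bool cardsE.
- rewrite -setI_eq0 -no_assigned; apply/eqP/setP => r.
  by rewrite !inE andbC.
Qed.

Lemma feasible_value_leq : \sum_(k : K) (zo k : nat) <= (dmax dk).+1 * n_admitted z.
Proof.
case/and3P: x_feasible => /forallP x_excl _ _.
apply: (@leq_trans (\sum_(k : K) (z k + (zo k && ~~ z k)))).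
  by apply: leq_sum => k _; case: (zo k); case: (z k).
rewrite big_split /= mulSn sum_nat_of_bool leq_add //.
  by rewrite /n_admitted; apply/eq_leq/eq_card => k; rewrite inE.
rewrite (leq_trans _ card_assigned_leq) //.
rewrite (leq_trans _ (sum_card_exclusive assigned x_excl)) //.
apply: leq_sum => k _; case: (boolP (zo k)) => //= zo_k.
by case: (boolP (z k)) => //= /(optimal_rejected_blocked zo_k).
Qed.

End GreedyRun.

Theorem proposition2 (K R : finType) (delta : K -> R -> bool) (dk : K -> nat)
  (hdk : forall k : K, 0 < dk k)
  (s : seq K) (A : K -> {set R}) (z : K -> bool)
  (hrun : greedy_run delta dk s A z) :
  opt_value delta dk <= (dmax dk).+1 * n_admitted z.
Proof. by apply/bigmax_leqP => -[x zo] /= /(feasible_value_leq hrun). Qed.
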